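(* Let $\mathcal{K}$ be a continuous unitary representation of $\overline{\mathfrak{S}}_\infty$ in a Hilbert space $\mathcal{H}$, let $n\ge 0$ be an integer, and let $P_n$ be the weak-operator limit of $\mathcal{K}({}^n\sigma_m)$ as $m\to\infty$. Then $\mathcal{K}(s)P_n=P_n$ for every $s\in\mathfrak{S}(n,\infty)$.
   Context: $\overline{\mathfrak{S}}_\infty$ is the group of all bijections of $\mathbb{N}$, with the Polish topology in which the subgroups $\mathfrak{S}(n,\infty)=\{s: s(k)=k \text{ for } k=1,\dots,n\}$ form a fundamental system of neighborhoods of the identity; continuity of $\mathcal{K}$ means $\lim_{k\to\infty}\sup_{s\in\mathfrak{S}(k,\infty)}\|\mathcal{K}(s)\eta-\eta\|=0$ for each $\eta\in\mathcal{H}$. $(k\;j)$ denotes the transposition of $k$ and $j$, and ${}^n\sigma_m=(n+1\;\;n+m+1)(n+2\;\;n+m+2)\cdots(n+m\;\;n+2m)$. The weak-operator limit $P_n=\lim_{m\to\infty}\mathcal{K}({}^n\sigma_m)$ exists. *)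

From mathcomp Require Import all_boot all_order all_algebra.
From mathcomp Require Import reals complex.
Set Implicit Arguments. Unset Strict Implicit. Unset Printing Implicit Defensive.
Import Order.TTheory GRing.Theory Num.Theory.
Local Open Scope ring_scope.
Local Open Scope complex_scope.

Section Hilbert.
Variable R : realType.
Variable H : lmodType R[i].
Variable ip : H -> H -> R[i].

Definition hnorm (x : H) : R[i] := sqrtC (ip x x).

Definition is_inner_product : Prop :=
  [/\ (forall (a : R[i]) (x y z : H), ip (a *: x + y) z = a * ip x z + ip y z),
      (forall x y : H, ip y x = (ip x y)^*),
      (forall x : H, 0 <= ip x x) &
      (forall x : H, ip x x = 0 -> x = 0)].

Definition hcomplete : Prop :=
  forall u : nat -> H,
    (forall e : R[i], 0 < e -> exists N, forall m k,
        (N <= m)%N -> (N <= k)%N -> hnorm (u m - u k) < e) ->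
    exists x : H, forall e : R[i], 0 < e -> exists N, forall m,
        (N <= m)%N -> hnorm (u m - x) < e.

Definition is_hilbert : Prop := is_inner_product /\ hcomplete.

Definition unitary (U : H -> H) : Prop :=
  [/\ linear U,
      (forall y : H, exists x : H, U x = y) &
      (forall x y : H, ip (U x) (U y) = ip x y)].

End Hilbert.

(* Convention: the paper's N = {1,2,...} is relabelled as             *)
(* nat = {0,1,...} via k |-> k-1.                                    *)

Record bij := Bij {
  bfun :> nat -> nat;
  binv : nat -> nat;
  bfunK : cancel bfun binv;
  binvK : cancel binv bfun }.

Definition bid : bij := @Bij id id (fun _ => erefl) (fun _ => erefl).

Lemma bcomp_K (s t : bij) : cancel (s \o t) (binv t \o binv s).
Proof. by move=> x /=; rewrite bfunK bfunK. Qed.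
Lemma bcomp_Kinv (s t : bij) : cancel (binv t \o binv s) (s \o t).
Proof. by move=> x /=; rewrite binvK binvK. Qed.
Definition bmul (s t : bij) : bij :=
  @Bij (s \o t) (binv t \o binv s) (bcomp_K s t) (bcomp_Kinv s t).

Definition tr_fun (k j x : nat) : nat :=
  if x == k then j else if x == j then k else x.
Lemma tr_funK k j : cancel (tr_fun k j) (tr_fun k j).
Proof.
move=> x; rewrite /tr_fun.
case: (eqVneq x k) => [->|xk]; first by rewrite eqxx; case: eqVneq => // ->.
case: (eqVneq x j) => [->|xj]; first by rewrite eqxx.
by rewrite (negPf xk) (negPf xj).
Qed.
Definition btr (k j : nat) : bij := @Bij (tr_fun k j) (tr_fun k j) (tr_funK k j) (tr_funK k j).

(* S(n, oo): bijections fixing the first n points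
   (paper: 1..n ; here 0..n-1) *)
Definition in_S (n : nat) (s : bij) : Prop := forall k, (k < n)%N -> s k = k.

(* ^n sigma_m = (n+1 n+m+1)(n+2 n+m+2)...(n+m n+2m)
   (paper indexing); here: product over i < m of (n+i  n+m+i). *)
Definition sigma (n m : nat) : bij :=
  foldr bmul bid [seq btr (n + i) (n + m + i) | i <- iota 0 m].

Section Rep.
Variable R : realType.
Variable H : lmodType R[i].
Variable ip : H -> H -> R[i].

Definition unitary_rep (K : bij -> H -> H) : Prop :=
  [/\ (forall s, unitary ip (K s)),
      (forall s t (x : H), K (bmul s t) x = K s (K t x)) &
      (forall x : H, K bid x = x)].

Definition rep_continuous (K : bij -> H -> H) : Prop :=
  forall (eta : H) (e : R[i]), 0 < e ->
    exists k0, forall k, (k0 <= k)%N ->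
      forall s, in_S k s -> hnorm ip (K s eta - eta) <= e.

Definition weak_op_limit (T : nat -> H -> H) (P : H -> H) : Prop :=
  forall (xi eta : H) (e : R[i]), 0 < e ->
    exists N, forall m, (N <= m)%N -> `| ip (T m xi) eta - ip (P xi) eta | < e.

End Rep.

From mathcomp Require Import all_boot all_order all_algebra.
From mathcomp Require Import reals complex.
From mathcomp Require Import ring zify.
From Stdlib Require Import FunctionalExtensionality ProofIrrelevance.
Import Order.TTheory GRing.Theory Num.Theory.
Local Open Scope ring_scope.
Local Open Scope complex_scope.
Set Implicit Arguments.

(* Let tau be a transposition of two points >= n and sigma = ^n sigma_m with
   m large.  Since sigma is an involution moving both points of tau above n+m,
   tau sigma = sigma u with u = sigma tau sigma in S(n+m, oo).  Hence
   <sigma x, c> = <tau sigma x, tau c> = <sigma u x, tau c>, and u x is close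
   to x by continuity; letting m -> oo gives <P x, c> = <P x, tau c>, i.e.
   K(tau) P = P.  Every s in S(n, oo) agrees on any initial segment [0, k)
   with a product t of such transpositions, so s = t w with w in S(k, oo),
   and ||K(s) P x - P x|| = ||K(w) P x - P x|| is small by continuity. *)

Lemma eq_of_close (F : numFieldType) (a b : F) :
  (forall e, 0 < e -> exists a' b',
     [/\ `|a - a'| <= e, `|a' - b'| <= e & `|b' - b| <= e]) -> a = b.
Proof.
move=> close; apply/eqP; rewrite -subr_eq0 -normr_le0.
apply/ler_addgt0Pr => e e0; rewrite add0r.
have e30 : 0 < e / 3%:R by rewrite divr_gt0 ?ltr0n.
have [a' [b' [h1 h2 h3]]] := close _ e30.
have -> : a - b = (a - a') + (a' - b') + (b' - b) by ring.
have -> : e = e / 3%:R + e / 3%:R + e / 3%:R by field.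
apply: (le_trans (ler_normD _ _)); rewrite lerD //.
exact: (le_trans (ler_normD _ _) (lerD h1 h2)).
Qed.

Section InnerProduct.
Variables (R : realType) (H : lmodType R[i]) (ip : H -> H -> R[i]).
Hypothesis ip_inner : is_inner_product ip.

Lemma ip_conj x y : ip y x = conjc (ip x y).
Proof. by case: ip_inner. Qed.

Lemma ipBl x y z : ip (x - y) z = ip x z - ip y z.
Proof.
case: ip_inner => ipDZ _ _ _.
by rewrite addrC -scaleN1r ipDZ mulN1r addrC.
Qed.

Lemma ip0l z : ip 0 z = 0.
Proof. by rewrite -(subrr (0 : H)) ipBl subrr. Qed.

Lemma ip0r z : ip z 0 = 0.
Proof. by rewrite ip_conj ip0l conjc0. Qed.

Lemma ipZl a x z : ip (a *: x) z = a * ip x z.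
Proof. by case: ip_inner => ipDZ _ _ _; rewrite -[a *: x]addr0 ipDZ ip0l addr0. Qed.

Lemma ipZr a x z : ip z (a *: x) = conjc a * ip z x.
Proof. by rewrite ip_conj ipZl rmorphM /= -ip_conj. Qed.

Lemma ipBr x y z : ip z (x - y) = ip z x - ip z y.
Proof. by rewrite ip_conj ipBl rmorphB /= -!ip_conj. Qed.

Lemma ip_ge0 x : 0 <= ip x x.
Proof. by case: ip_inner. Qed.

Lemma eq_of_ip_eq x x' : (forall y, ip x y = ip x' y) -> x = x'.
Proof.
case: ip_inner => _ _ _ ip_eq0 eq_ip; apply/eqP; rewrite -subr_eq0; apply/eqP.
by apply: ip_eq0; rewrite ipBl eq_ip subrr.
Qed.

Lemma ip_cauchy_schwarz_sqr x y : `|ip x y| ^+ 2 <= ip x x * ip y y.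
Proof.
have [yy0|yy_neq0] := eqVneq (ip y y) 0.
  case: ip_inner => _ _ _ ip_eq0.
  by rewrite (ip_eq0 _ yy0) ip0r normr0 expr0n /= ip0l mulr0.
set c := ip x y; set b := ip y y.
have b_gt0 : 0 < b by rewrite lt0r yy_neq0 ip_ge0.
have E : ip (b *: x - c *: y) (b *: x - c *: y) = b * (b * ip x x - conjc c * c).
  rewrite !(ipBl, ipBr, ipZl, ipZr) (ip_conj x y) -/c.
  have -> : conjc b = b by rewrite /b -ip_conj.
  by rewrite -/b; ring.
have := ip_ge0 (b *: x - c *: y); rewrite E pmulr_rge0 // subr_ge0.
by rewrite sqr_normc [c * _]mulrC [ip x x * _]mulrC.
Qed.

Lemma hnorm_ge0 x : 0 <= hnorm ip x.
Proof. by rewrite sqrtC_ge0 ip_ge0. Qed.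

Lemma ip_cauchy_schwarz x y : `|ip x y| <= hnorm ip x * hnorm ip y.
Proof.
rewrite /hnorm -sqrtCM ?nnegrE ?ip_ge0 // -(sqrCK (normr_ge0 (ip x y))).
by rewrite ler_sqrtC ?nnegrE ?exprn_ge0 ?mulr_ge0 ?ip_ge0 ?ip_cauchy_schwarz_sqr.
Qed.

Lemma eq_of_hnorm_small x y : (forall e, 0 < e -> hnorm ip (x - y) <= e) -> x = y.
Proof.
move=> small; apply/eqP; rewrite -subr_eq0; apply/eqP.
case: ip_inner => _ _ _ ip_eq0; apply: ip_eq0; apply/eqP.
rewrite -sqrtC_eq0 eq_le hnorm_ge0 andbT.
by apply/ler_addgt0Pr => e e0; rewrite add0r small.
Qed.

End InnerProduct.

Lemma bij_eq (s t : bij) : (forall x, s x = t x) -> s = t.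
Proof.
case: s => f g fK gK; case: t => f' g' fK' gK' /= eq_st.
have ef : f = f' by apply: functional_extensionality.
subst f'.
have eg : g = g' by apply: functional_extensionality => y; rewrite -{1}(gK' y) fK.
subst g'.
by rewrite (proof_irrelevance _ fK fK') (proof_irrelevance _ gK gK').
Qed.

Lemma bij_inj (s : bij) : injective s.
Proof. exact: can_inj (@bfunK s). Qed.

Definition bij_inv (s : bij) : bij := Bij (@binvK s) (@bfunK s).

Definition sigma_fun (n m x : nat) : nat :=
  if (n <= x < n + m)%N then (x + m)%N
  else if (n + m <= x < n + m + m)%N then (x - m)%N else x.

Lemma sigma_partialE n m j l x : (j + l <= m)%N ->
  foldr bmul bid [seq btr (n + i) (n + m + i) | i <- iota j l] x =
  if (n + j <= x < n + j + l)%N then (x + m)%N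
  else if (n + m + j <= x < n + m + j + l)%N then (x - m)%N else x.
Proof.
elim: l j x => [|l IHl] j x jlm /=.
  by rewrite !addn0; case: ifP => ?; [lia|]; case: ifP => ? //; lia.
by rewrite IHl; last lia; rewrite /tr_fun; repeat case: ifP; lia.
Qed.

Lemma sigmaE n m x : sigma n m x = sigma_fun n m x.
Proof. by rewrite /sigma sigma_partialE // /sigma_fun !addn0. Qed.

Lemma sigma_funK n m : involutive (sigma_fun n m).
Proof. by move=> x; rewrite /sigma_fun; repeat case: ifP; lia. Qed.

Lemma sigma_conj_btr_in_S n m a b :
  (n <= a < n + m)%N -> (n <= b < n + m)%N ->
  in_S (n + m) (bmul (sigma n m) (bmul (btr a b) (sigma n m))).
Proof.
move=> ha hb k hk /=; rewrite !sigmaE /sigma_fun /tr_fun in hk *.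
by repeat case: ifP; lia.
Qed.

Inductive tr_prod (n : nat) : bij -> Prop :=
| tr_prod_id : tr_prod n bid
| tr_prod_mul a b t :
    (n <= a)%N -> (n <= b)%N -> tr_prod n t -> tr_prod n (bmul (btr a b) t).

Lemma tr_prod_in_S n t : tr_prod n t -> in_S n t.
Proof.
elim=> [//|a b {}t na nb _ t_in_S] k kn /=.
by rewrite t_in_S // /tr_fun; case: eqVneq => [|_]; [lia|]; case: eqVneq => [|_] //; lia.
Qed.

Lemma in_S_ge n s j : in_S n s -> (n <= j)%N -> (n <= s j)%N.
Proof.
move=> s_in_S nj; rewrite leqNgt; apply/negP => sj.
by have := @bij_inj s _ _ (s_in_S _ sj); lia.
Qed.

Lemma tr_prod_approx n s : in_S n s ->
  forall k, exists2 t, tr_prod n t & forall i, (i < k)%N -> t i = s i.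
Proof.
move=> s_in_S; elim=> [|k [t t_prod eq_ts]]; first by exists bid; [exact: tr_prod_id|].
have t_in_S := tr_prod_in_S t_prod.
have [kn|nk] := ltnP k n.
  exists t => // i; rewrite ltnS leq_eqVlt => /predU1P [->|]; last exact: eq_ts.
  by rewrite t_in_S // s_in_S.
exists (bmul (btr (t k) (s k)) t).
  by apply: tr_prod_mul => //; apply: in_S_ge.
move=> i; rewrite ltnS leq_eqVlt => /predU1P [->|ik] /=; first by rewrite /tr_fun eqxx.
rewrite /tr_fun; case: eqVneq => [/bij_inj|_]; first lia.
by rewrite eq_ts //; case: eqVneq => [/bij_inj|_] //; lia.
Qed.

Section Representation.
Variables (R : realType) (H : lmodType R[i]) (ip : H -> H -> R[i]).
Variable K : bij -> H -> H.
Hypotheses (ip_inner : is_inner_product ip) (K_rep : unitary_rep ip K).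

Lemma repM s t x : K (bmul s t) x = K s (K t x).
Proof. by case: K_rep. Qed.

Lemma rep_ip s x y : ip (K s x) (K s y) = ip x y.
Proof. by case: K_rep => unit _ _; case: (unit s). Qed.

Lemma rep_surj s y : exists x, K s x = y.
Proof. by case: K_rep => unit _ _; case: (unit s). Qed.

Lemma repB s u v : K s (u - v) = K s u - K s v.
Proof.
case: K_rep => unit _ _; case: (unit s) => lin _ _.
by rewrite addrC -scaleN1r lin scaleN1r addrC.
Qed.

Lemma rep_hnorm s x : hnorm ip (K s x) = hnorm ip x.
Proof. by rewrite /hnorm rep_ip. Qed.

Variables (n : nat) (P : H -> H).
Hypotheses (K_cont : rep_continuous ip K)
           (P_lim : weak_op_limit ip (fun m => K (sigma n m)) P).

Lemma ip_P_btr x a b c : (n <= a)%N -> (n <= b)%N ->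
  ip (P x) c = ip (P x) (K (btr a b) c).
Proof.
move=> na nb; set y := K (btr a b) c.
apply: eq_of_close => e e0.
have e'0 : 0 < e / (1 + hnorm ip y).
  by rewrite divr_gt0 // ltr_wpDr ?hnorm_ge0.
have [N1 lim_c] := P_lim x c e e0.
have [N2 lim_y] := P_lim x y e e0.
have [k0 cont_x] := K_cont x _ e'0.
pose m := (N1 + N2 + k0 + a + b + 1)%N.
pose u := bmul (sigma n m) (bmul (btr a b) (sigma n m)).
have u_in_S : in_S (n + m) u by apply: sigma_conj_btr_in_S; lia.
have btr_sigma : forall z, K (btr a b) (K (sigma n m) z) = K (sigma n m) (K u z).
  move=> z; rewrite -!repM; congr (K _ z); apply: bij_eq => k /=.
  by rewrite !sigmaE sigma_funK.
exists (ip (K (sigma n m) x) c), (ip (K (sigma n m) x) y); split.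
- by rewrite -normrN opprB ltW // lim_c; lia.
- rewrite -(rep_ip (btr a b)) btr_sigma -ipBl // -repB.
  apply: (le_trans (ip_cauchy_schwarz ip_inner _ _)); rewrite rep_hnorm.
  have cont := cont_x (n + m)%N ltac:(lia) u u_in_S.
  apply: (le_trans (ler_wpM2r (hnorm_ge0 ip_inner _) cont)).
  rewrite mulrAC ler_pdivrMr ?ltr_wpDr ?hnorm_ge0 //.
  by rewrite ler_wpM2l ?(ltW e0) // lerDr.
- by rewrite ltW // lim_y; lia.
Qed.

Lemma rep_btr_fixes_P x a b : (n <= a)%N -> (n <= b)%N -> K (btr a b) (P x) = P x.
Proof.
move=> na nb; apply: (eq_of_ip_eq ip_inner) => y.
have [c <-] := rep_surj (btr a b) y.
by rewrite rep_ip -ip_P_btr.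
Qed.

Lemma rep_tr_prod_fixes_P t x : tr_prod n t -> K t (P x) = P x.
Proof.
elim=> [|a b {}t na nb _ IHt]; first by case: K_rep.
by rewrite repM IHt rep_btr_fixes_P.
Qed.

End Representation.

Theorem lemma3 (R : realType) (H : lmodType R[i]) (ip : H -> H -> R[i])
    (K : bij -> H -> H) (n : nat) (P : H -> H) :
  is_hilbert ip ->
  unitary_rep ip K ->
  rep_continuous ip K ->
  weak_op_limit ip (fun m => K (sigma n m)) P ->
  forall s : bij, in_S n s -> forall x : H, K s (P x) = P x.
Proof.
move=> [ip_inner _] K_rep K_cont P_lim s s_in_S x.
apply: (eq_of_hnorm_small ip_inner) => e e0.
have [k cont_Px] := K_cont (P x) e e0.
have [t t_prod eq_ts] := tr_prod_approx s_in_S k.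
pose w := bmul (bij_inv t) s.
have w_in_S : in_S k w by move=> i ik /=; rewrite -eq_ts ?bfunK.
have -> : s = bmul t w by apply: bij_eq => i /=; rewrite binvK.
rewrite (repM K_rep) -{2}(rep_tr_prod_fixes_P ip_inner K_rep K_cont P_lim x t_prod).
rewrite -(repB K_rep) (rep_hnorm K_rep).
exact: cont_Px (leqnn k) _ w_in_S.
Qed.
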